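(* Let $X$ be a proper geodesic metric space with horofunction boundary $\partial_hX$ (based at $o$). Let $\alpha,\beta:[0,\infty)\to X$ be geodesic rays emanating from $o$, ending at $\alpha^+,\beta^+\in\partial_hX$. Suppose there are sequences of real numbers $s_n,r_n\to\infty$ such that $\limsup_{n\to\infty}r_n/s_n<1$ and, for all sufficiently large $n$, $\limsup_{t\to\infty}d(o,[\alpha(s_n),\beta(t)])\le r_n$ (for some choice of geodesic segments $[\alpha(s_n),\beta(t)]$). Then $[\alpha^+]_s\ne[\beta^+]_s$.
   Context: For $y\in X$, $b_y(x)=d(x,y)-d(o,y)$; $\partial_hX$ consists of pointwise limits $b_\xi=\lim b_{y_n}$ along unbounded sequences $y_n$. A geodesic ray $\alpha$ converges to $\alpha^+$ with horofunction $\alpha^+(x)=\lim_{t\to\infty}[d(\alpha(t),x)-t]$. Two boundary points $\xi,\eta$ have sublinear difference, written $[\xi]_s=[\eta]_s$, if $\lim_{n\to\infty}\sup_{d(o,x)\ge n}\frac{|b_\xi(x)-b_\eta(x)|}{d(o,x)}=0$. *)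

From Stdlib Require Import Reals Lra.
From Coquelicot Require Import Coquelicot.
Open Scope R_scope.

Definition is_metric {X : Type} (d : X -> X -> R) : Prop :=
  (forall x y, d x y = 0 <-> x = y) /\
  (forall x y, d x y = d y x) /\
  (forall x y z, d x z <= d x y + d y z).

(* A geodesic segment from x to y: an isometric map of [0, d x y] into X
   (parametrised on R, only its values on [0, d x y] matter). *)
Definition is_geodesic_segment {X : Type} (d : X -> X -> R)
    (g : R -> X) (x y : X) : Prop :=
  g 0 = x /\ g (d x y) = y /\
  forall s t, 0 <= s <= d x y -> 0 <= t <= d x y -> d (g s) (g t) = Rabs (s - t).

Definition segment_set {X : Type} (d : X -> X -> R) (g : R -> X) (x y : X) : X -> Prop :=
  fun p => exists u, 0 <= u <= d x y /\ p = g u.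

Definition geodesic_space {X : Type} (d : X -> X -> R) : Prop :=
  forall x y : X, exists g : R -> X, is_geodesic_segment d g x y.

(* Proper: closed balls are compact; in a metric space this is stated as
   sequential compactness of closed balls (every bounded sequence has a
   convergent subsequence; the limit lies in the closed ball automatically). *)
Definition proper_space {X : Type} (d : X -> X -> R) : Prop :=
  forall (u : nat -> X) (x0 : X) (r : R),
    (forall n, d x0 (u n) <= r) ->
    exists (phi : nat -> nat) (x : X),
      (forall n, (phi n < phi (S n))%nat) /\
      is_lim_seq (fun n => d (u (phi n)) x) 0.

Definition is_geodesic_ray {X : Type} (d : X -> X -> R) (o : X) (a : R -> X) : Prop :=
  a 0 = o /\ forall s t, 0 <= s -> 0 <= t -> d (a s) (a t) = Rabs (s - t).

Definition is_ray_horofunction {X : Type} (d : X -> X -> R) (a : R -> X)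
    (h : X -> R) : Prop :=
  forall x, is_lim (fun t => d (a t) x - t) p_infty (h x).

Definition dist_set {X : Type} (d : X -> X -> R) (o : X) (S : X -> Prop) : R :=
  real (Glb_Rbar (fun r => exists p, S p /\ r = d o p)).

Definition limsup_pinfty_le (f : R -> R) (c : R) : Prop :=
  forall eps, 0 < eps -> exists T, forall t, T <= t -> f t <= c + eps.

(* Sublinear difference of two boundary points (given by their functions):
   lim_{n->oo} sup_{d(o,x) >= n} |xi x - eta x| / d(o,x) = 0. *)
Definition sublinear_eq {X : Type} (d : X -> X -> R) (o : X) (xi eta : X -> R) : Prop :=
  forall eps, 0 < eps -> exists N : nat, forall n : nat, (N <= n)%nat ->
    forall x, INR n <= d o x -> Rabs (xi x - eta x) / d o x <= eps.

(** At [x = alpha (s n)] the horofunction of [alpha] equals [-s n].  Every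
    segment [[x, beta t]] passes within about [r n] of [o], so by the triangle
    inequality through such a point [d(x, beta t) >= s n + t - 2 r n], whence
    [hb x >= s n - 2 r n].  Thus [|ha x - hb x| >= 2 (s n - r n)], which is
    bounded below by a fixed positive multiple of [d(o, x) = s n] because
    [r n / s n] stays below some [L < 1]; so the difference is not sublinear. *)

From Stdlib Require Import Reals Lra Lia.
From Coquelicot Require Import Coquelicot.
Open Scope R_scope.

Lemma LimSup_seq_lt_eventually (u : nat -> R) (l : R) :
  Rbar_lt (LimSup_seq u) l ->
  exists L, L < l /\ exists N, forall n, (N <= n)%nat -> u n < L.
Proof.
  destruct (ex_LimSup_seq u) as [ls Hls].
  rewrite (is_LimSup_seq_unique u ls Hls).
  destruct ls as [ls| |]; simpl; intros Hlt; try contradiction.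
  - assert (Hgap : 0 < (l - ls) / 2) by lra.
    destruct (Hls (mkposreal _ Hgap)) as [_ [N HN]].
    exists (ls + (l - ls) / 2); split; [lra | now exists N].
  - destruct (Hls (l - 1)) as [N HN].
    exists (l - 1); split; [lra | now exists N].
Qed.

Section MetricSpace.

Variables (X : Type) (d : X -> X -> R).
Hypothesis Hmet : is_metric d.

Lemma metric_self (x : X) : d x x = 0.
Proof. now apply Hmet. Qed.

Lemma metric_sym (x y : X) : d x y = d y x.
Proof. apply Hmet. Qed.

Lemma metric_triangle (x y z : X) : d x z <= d x y + d y z.
Proof. apply Hmet. Qed.

Lemma metric_ge0 (x y : X) : 0 <= d x y.
Proof.
  generalize (metric_triangle x y x) (metric_sym x y) (metric_self x); lra.
Qed.

Lemma dist_set_approx (o p0 : X) (S : X -> Prop) (eps : R) :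
  S p0 -> 0 < eps -> exists p, S p /\ d o p < dist_set d o S + eps.
Proof.
  intros Hp0 Heps.
  set (E := fun r => exists p, S p /\ r = d o p).
  destruct (Glb_Rbar_correct E) as [Hlb Hglb].
  assert (Hle : Rbar_le (Glb_Rbar E) (d o p0)) by (apply Hlb; now exists p0).
  assert (Hge : Rbar_le 0 (Glb_Rbar E)).
  { apply Hglb; intros r [p [_ ->]]; apply metric_ge0. }
  unfold dist_set; fold E.
  destruct (Glb_Rbar E) as [g| |]; simpl in Hle, Hge |- *; try contradiction.
  apply Classical_Prop.NNPP; intros Hnone.
  assert (Hbound : Rbar_le (g + eps) g).
  { apply Hglb; intros r [p [Hp ->]]; simpl.
    apply Rnot_lt_le; intros Hlt; apply Hnone; now exists p. }
  simpl in Hbound; lra.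
Qed.

Lemma geodesic_segment_split (g : R -> X) (x y : X) (u : R) :
  is_geodesic_segment d g x y -> 0 <= u <= d x y ->
  d x (g u) = u /\ d (g u) y = d x y - u.
Proof.
  intros [Hg0 [Hg1 Hiso]] Hu.
  assert (H0 : 0 <= 0 <= d x y) by lra.
  assert (H1 : 0 <= d x y <= d x y) by lra.
  rewrite <- Hg0 at 1; rewrite <- Hg1 at 1.
  rewrite (Hiso 0 u), (Hiso u (d x y)) by assumption.
  split; rewrite Rabs_minus_sym, Rabs_pos_eq; lra.
Qed.

Lemma geodesic_segment_dist_ge (o x y : X) (g : R -> X) :
  is_geodesic_segment d g x y ->
  d o x + d o y - 2 * dist_set d o (segment_set d g x y) <= d x y.
Proof.
  intros Hg.
  apply Rle_plus_epsilon; intros eps Heps.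
  assert (Hx : segment_set d g x y x).
  { exists 0; split; [generalize (metric_ge0 x y); lra | symmetry; apply Hg]. }
  destruct (dist_set_approx o x _ (eps / 2) Hx ltac:(lra))
    as [p [[u [Hu ->]] Hclose]].
  destruct (geodesic_segment_split g x y u Hg Hu) as [Hxp Hpy].
  generalize (metric_triangle o (g u) x) (metric_triangle o (g u) y)
    (metric_sym (g u) x); lra.
Qed.

Lemma geodesic_ray_dist (o : X) (a : R -> X) (s t : R) :
  is_geodesic_ray d o a -> 0 <= s <= t -> d (a s) (a t) = t - s.
Proof.
  intros [_ Ha] Hst.
  rewrite Ha, Rabs_minus_sym, Rabs_pos_eq; lra.
Qed.

Lemma geodesic_ray_dist_origin (o : X) (a : R -> X) (t : R) :
  is_geodesic_ray d o a -> 0 <= t -> d o (a t) = t.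
Proof.
  intros Ha Ht; rewrite <- (proj1 Ha), (geodesic_ray_dist o a 0 t Ha) by lra; lra.
Qed.

Lemma ray_horofunction_on_ray (o : X) (a : R -> X) (h : X -> R) (s : R) :
  is_geodesic_ray d o a -> is_ray_horofunction d a h -> 0 <= s ->
  h (a s) = - s.
Proof.
  intros Ha Hh Hs.
  assert (Hconst : is_lim (fun t => d (a t) (a s) - t) p_infty (- s)).
  { apply (is_lim_ext_loc (fun _ => - s)); [| apply is_lim_const].
    exists s; intros t Ht.
    rewrite metric_sym, (geodesic_ray_dist o a s t Ha) by lra; lra. }
  apply is_lim_unique in Hconst.
  rewrite (is_lim_unique _ _ _ (Hh (a s))) in Hconst.
  now injection Hconst.
Qed.

Lemma ray_horofunction_ge_of_close_segments (o x : X) (b : R -> X)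
    (h : X -> R) (g : R -> R -> X) (c : R) :
  is_geodesic_ray d o b -> is_ray_horofunction d b h ->
  (forall t, is_geodesic_segment d (g t) x (b t)) ->
  limsup_pinfty_le (fun t => dist_set d o (segment_set d (g t) x (b t))) c ->
  d o x - 2 * c <= h x.
Proof.
  intros Hb Hh Hg Hclose.
  apply Rle_plus_epsilon; intros eps Heps.
  destruct (Hclose (eps / 2) ltac:(lra)) as [T HT].
  enough (Hle : Rbar_le (d o x - 2 * c - eps) (h x)) by (simpl in Hle; lra).
  apply (is_lim_le_loc (fun _ => d o x - 2 * c - eps) (fun t => d (b t) x - t)
           p_infty); [| apply is_lim_const | apply Hh].
  exists (Rmax T 0); intros t Ht.
  generalize (Rmax_l T 0) (Rmax_r T 0); intros HTt H0t.
  generalize (HT t ltac:(lra)) (geodesic_segment_dist_ge o x (b t) (g t) (Hg t))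
    (geodesic_ray_dist_origin o b t Hb ltac:(lra)) (metric_sym (b t) x); lra.
Qed.

Lemma not_sublinear_eq_of_linear_gap (o : X) (xi eta : X -> R) (c : R) :
  0 < c ->
  (forall M, exists x, M <= d o x /\ c * d o x <= Rabs (xi x - eta x)) ->
  ~ sublinear_eq d o xi eta.
Proof.
  intros Hc Hgap Hsub.
  destruct (Hsub (c / 2) ltac:(lra)) as [N HN].
  destruct (Hgap (Rmax (INR N) 1)) as [x [Hfar Hdiff]].
  generalize (Rmax_l (INR N) 1) (Rmax_r (INR N) 1); intros HN1 H11.
  assert (Hratio := HN N (Nat.le_refl N) x ltac:(lra)).
  apply (Rle_div_l _ _ (d o x)) in Hratio; [nra | lra].
Qed.

End MetricSpace.

Theorem lemma2p5 (X : Type) (d : X -> X -> R) (o : X)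
  (Hmet : is_metric d) (Hgeod : geodesic_space d) (Hprop : proper_space d)
  (alpha beta : R -> X) (Ha : is_geodesic_ray d o alpha) (Hb : is_geodesic_ray d o beta)
  (ha hb : X -> R) (Hha : is_ray_horofunction d alpha ha) (Hhb : is_ray_horofunction d beta hb)
  (s r : nat -> R) (Hs : is_lim_seq s p_infty) (Hr : is_lim_seq r p_infty)
  (Hrs : Rbar_lt (LimSup_seq (fun n => r n / s n)) (Finite 1))
  (seg : nat -> R -> R -> X)
  (Hseg : forall n t, is_geodesic_segment d (seg n t) (alpha (s n)) (beta t))
  (Hclose : exists N : nat, forall n : nat, (N <= n)%nat ->
     limsup_pinfty_le
       (fun t => dist_set d o (segment_set d (seg n t) (alpha (s n)) (beta t)))
       (r n)) :
  ~ sublinear_eq d o ha hb.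
Proof.
  destruct (LimSup_seq_lt_eventually _ _ Hrs) as [L [HL1 [N1 Hratio]]].
  destruct Hclose as [N2 Hclose].
  apply (not_sublinear_eq_of_linear_gap X d o ha hb (1 - L)); [lra |].
  intros M.
  apply is_lim_seq_spec in Hs.
  destruct (Hs (Rmax M 0)) as [N3 Hlarge].
  set (n := (N1 + N2 + N3)%nat).
  generalize (Hlarge n ltac:(lia)) (Rmax_l M 0) (Rmax_r M 0); intros Hsn HM H0.
  assert (Hrn : r n < L * s n) by (apply Rlt_div_l; [lra | apply Hratio; lia]).
  exists (alpha (s n)).
  rewrite (geodesic_ray_dist_origin X d o alpha (s n) Ha ltac:(lra)).
  split; [lra |].
  rewrite Rabs_minus_sym; eapply Rle_trans; [| apply Rle_abs].
  generalize (ray_horofunction_on_ray X d Hmet o alpha ha (s n) Ha Hha ltac:(lra))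
    (ray_horofunction_ge_of_close_segments X d Hmet o (alpha (s n)) beta hb
       (seg n) (r n) Hb Hhb (Hseg n) (Hclose n ltac:(lia)))
    (geodesic_ray_dist_origin X d o alpha (s n) Ha ltac:(lra)).
  nra.
Qed.
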